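(* Let $\nu$ be a Lévy measure concentrated on $\mathbb{Z}^n\setminus\{\mathbf{0}\}$ with $\int_{\mathbb{R}^n}\min(1,\|\mathbf{y}\|)\nu(d\mathbf{y})<\infty$, let $N$ be a homogeneous Poisson random measure on $\mathbb{R}^n\times[0,1]\times\mathbb{R}$ with intensity $\nu(d\mathbf{y})\,dx\,ds$, and $\mathbf{L}=(L^{(1)},\dots,L^{(n)})^\top$, $\mathbf{L}(dx,ds)=\int_{\mathbb{R}^n}\mathbf{y}\,N(d\mathbf{y},dx,ds)$. Fix $i\in\{1,\dots,n\}$ and let $d^{(i)}:(-\infty,0]\to[0,1]$ be continuous with $\int_{-\infty}^0d^{(i)}(s)\,ds<\infty$. Then $$X^{(i)}_{0,t}:=L^{(i)}\big(\{(x,s):s\le0,\ 0\le x\le d^{(i)}(s-t)\}\big)\to0\quad\text{in probability as }t\to\infty.$$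
   Context: $X^{(i)}_{0,t}$ is the contribution, to the $i$-th component $Y^{(i)}_t=L^{(i)}(\{(x,s):s\le t,\ 0\le x\le d^{(i)}(s-t)\})$ of the trawl process, coming from the part of the trawl lying at times $s\le0$. *)

From HB Require Import structures.
From mathcomp Require Import all_boot all_order all_algebra.
From mathcomp Require Import all_classical all_reals all_analysis.
From mathcomp Require Import measurable_realfun.
Set Implicit Arguments. Unset Strict Implicit. Unset Printing Implicit Defensive.
Import Order.TTheory GRing.Theory Num.Theory.
Import numFieldNormedType.Exports.
Local Open Scope classical_set_scope.
Local Open Scope ring_scope.

(* The state space  R^n x R x R  of the Poisson random measure: a point is
   (y, (x, s)) with y the jump size, x the "height" coordinate and s time. *)
Definition PRMspace (R : realType) (n : nat) := (n.-tuple R * (R * R))%type.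

Definition tnorm (R : realType) (n : nat) (y : n.-tuple R) : R :=
  Num.sqrt (\sum_(j < n) (tnth y j) ^+ 2).

Definition in_Zn_minus0 (R : realType) (n : nat) (y : n.-tuple R) : Prop :=
  (forall j, tnth y j \is a Num.int) /\ (exists j, tnth y j != 0).

Definition levy_measure (R : realType) (n : nat)
    (nu : {measure set (n.-tuple R) -> \bar R}) : Prop :=
  nu [set y | forall j, tnth y j = 0] = 0%E /\
  (\int[nu]_y (Num.min 1 (tnorm y ^+ 2))%:E < +oo)%E.

Definition poisson_weight (R : realType) (r : R) (k : nat) : R :=
  r ^+ k / (k`!)%:R * expR (- r).

Definition poisson_random_measure (R : realType) (dO : measure_display)
    (Omega : measurableType dO) (P : probability Omega R)
    (dE : measure_display) (E : measurableType dE)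
    (mu : set E -> \bar R) (N : Omega -> {measure set E -> \bar R}) : Prop :=
  (forall A, measurable A ->
     measurable_fun [set: Omega] ((fun w => N w A) : Omega -> \bar R)) /\
  (forall A, measurable A -> (mu A < +oo)%E -> forall k : nat,
      P [set w | N w A = (k%:R)%:E] = (poisson_weight (fine (mu A)) k)%:E) /\
  (forall A, measurable A -> mu A = +oo%E ->
      P [set w | N w A = +oo%E] = 1%E) /\
  (forall (m : nat) (A : 'I_m -> set E) (B : 'I_m -> set (\bar R)),
      (forall j, measurable (A j)) ->
      (forall j j', j != j' -> A j `&` A j' = set0) ->
      (forall j, measurable (B j)) ->
      P (\bigcap_(j in [set: 'I_m]) [set w | B j (N w (A j))]) =
      (\prod_(j < m) fine (P [set w | B j (N w (A j))]))%:E).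

(* Intensity  nu(dy) dx ds  on  R^n x [0,1] x R  (extended by zero outside
   x in [0,1]). *)
Definition prm_intensity (R : realType) (n : nat)
    (nu : {measure set (n.-tuple R) -> \bar R}) : set (PRMspace R n) -> \bar R :=
  fun A => (nu \x ((@lebesgue_measure R) \x (@lebesgue_measure R)))%E
             (A `&` [set z | 0 <= z.2.1 <= 1]).

Definition Lcomp (R : realType) (n : nat) (i : 'I_n)
    (N : {measure set (PRMspace R n) -> \bar R}) (B : set (R * R)) : \bar R :=
  (\int[N]_(z in [set z : PRMspace R n | B z.2]) (tnth z.1 i)%:E)%E.

Definition trawl_past (R : realType) (d : R -> R) (t : R) : set (R * R) :=
  [set p | p.2 <= 0 /\ 0 <= p.1 <= d (p.2 - t)].

Definition X0t (R : realType) (n : nat) (i : 'I_n)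
    (N : {measure set (PRMspace R n) -> \bar R}) (d : R -> R) (t : R) : \bar R :=
  Lcomp i N (trawl_past d t).

From HB Require Import structures.
From mathcomp Require Import all_boot all_order all_algebra.
From mathcomp Require Import all_classical all_reals all_analysis.
From mathcomp Require Import measurable_realfun lra.
Set Implicit Arguments.
Unset Strict Implicit.
Unset Printing Implicit Defensive.
Import Order.TTheory GRing.Theory Num.Theory.
Import numFieldNormedType.Exports.
Local Open Scope classical_set_scope.
Local Open Scope ring_scope.

(* On the event that N puts no point in R^n x A_t, with A_t = trawl_past d t,
   the integral X_{0,t} vanishes; hence P(|X_{0,t}| > eps) <= 1 - exp(-m_t) <= m_t,
   where m_t is the intensity of R^n x A_t.  Since nu lives on Z^n \ {0}, where
   |y| >= 1, the integrability of min(1, |y|) makes nu finite, and Fubini with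
   translation invariance of Lebesgue measure gives
   m_t = nu(R^n) * \int_{-oo}^{-t} d, which tends to 0 by dominated convergence. *)

Section Zn_support.
Context (R : realType) (n : nat).

Lemma measurable_int : measurable [set r : R | r \is a Num.int].
Proof.
have -> : [set r : R | r \is a Num.int] = \bigcup_(k : int) [set k%:~R].
  apply/seteqP; split => r /=; first by move=> /intrP[k ->]; exists k.
  by move=> [k _ ->]; apply/intrP; exists k.
apply: countable_bigcupT_measurable => [|k]; [exact: countableP|exact: measurable_set1].
Qed.

Lemma measurable_in_Zn_minus0 : measurable [set y : n.-tuple R | in_Zn_minus0 y].
Proof.
have -> : [set y : n.-tuple R | in_Zn_minus0 y] =
    \bigcap_(j in [set: 'I_n]) ((@tnth n R)^~ j @^-1` [set r | r \is a Num.int]) `&`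
    \bigcup_(j in [set: 'I_n]) ((@tnth n R)^~ j @^-1` ~` [set 0]).
  apply/seteqP; split => y /=.
    by move=> [yZ [j /eqP yj0]]; split; [move=> k _; exact: yZ|exists j].
  by move=> [yZ [j _ /eqP yj0]]; split; [move=> k; exact: yZ|exists j].
have mtnth j A : measurable A -> measurable ((@tnth n R)^~ j @^-1` A).
  by move=> mA; rewrite -[X in measurable X]setTI; exact: measurable_tnth.
apply: measurableI.
  apply: fin_bigcap_measurable => [|j _]; first exact: finite_finset.
  exact: mtnth measurable_int.
apply: fin_bigcup_measurable => [|j _]; first exact: finite_finset.
by apply: mtnth; apply: measurableC; exact: measurable_set1.
Qed.

Lemma measurable_tnorm : measurable_fun setT (@tnorm R n).
Proof.
apply: measurableT_comp.
  by apply: continuous_measurable_fun; exact: sqrt_continuous.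
by apply: measurable_sum => j; apply: measurable_funX; exact: measurable_tnth.
Qed.

Lemma ler_tnth_tnorm (y : n.-tuple R) (j : 'I_n) : `|tnth y j| <= tnorm y.
Proof.
rewrite /tnorm -sqrtr_sqr ler_sqrt; last by apply: sumr_ge0 => k _; exact: sqr_ge0.
by rewrite (bigD1 j) //= lerDl; apply: sumr_ge0 => k _; exact: sqr_ge0.
Qed.

Lemma tnorm_ge1 (y : n.-tuple R) : in_Zn_minus0 y -> 1 <= tnorm y.
Proof.
by move=> [yZ [j yj0]]; exact: le_trans (norm_intr_ge1 (yZ j) yj0) (ler_tnth_tnorm y j).
Qed.

End Zn_support.

Lemma measureT_le_integral d (T : measurableType d) (R : realType)
    (mu : {measure set T -> \bar R}) (S : set T) (f : T -> \bar R) :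
  measurable S -> mu (~` S) = 0%E -> measurable_fun setT f ->
  (forall x, (0 <= f x)%E) -> (forall x, S x -> (1 <= f x)%E) ->
  (mu setT <= \int[mu]_x f x)%E.
Proof.
move=> mS muSC mf f0 f1.
have -> : mu setT = mu S.
  rewrite -(setUv S) measureU //; [|exact: measurableC|by rewrite setICr].
  by rewrite -[RHS]adde0; congr (_ + _).
rewrite -[mu S]mul1e -integral_cst //.
apply: (@le_trans _ _ (\int[mu]_(x in S) f x)%E).
  by apply: ge0_le_integral => //; exact: measurable_funS mf.
by apply: ge0_subset_integral.
Qed.

Lemma levy_measure_Zn_finite (R : realType) (n : nat)
    (nu : {measure set (n.-tuple R) -> \bar R}) :
  nu [set y | ~ in_Zn_minus0 y] = 0%E ->
  (\int[nu]_y (Num.min 1 (tnorm y))%:E < +oo)%E -> (nu setT < +oo)%E.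
Proof.
move=> nuZ nu_int; apply: le_lt_trans nu_int.
apply: (@measureT_le_integral _ _ _ nu [set y | in_Zn_minus0 y]).
- exact: measurable_in_Zn_minus0.
- exact: nuZ.
- by apply/measurable_EFinP; apply: measurable_minr => //; exact: measurable_tnorm.
- by move=> y; rewrite lee_fin le_min ler01 sqrtr_ge0.
- by move=> y /tnorm_ge1 y1; rewrite lee_fin le_min lexx.
Qed.

Section lebesgue_translation.
Context (R : realType) (t : R).
Local Open Scope ereal_scope.

Lemma lebesgue_measure_preimage_center (A : set R) : measurable A ->
  lebesgue_measure (center t @^-1` A) = lebesgue_measure A.
Proof.
move=> mA; rewrite -[LHS]/(pushforward lebesgue_measure (center t) A).
(* [pushforward] is a measure only given the measurability of [center t],
   which unification cannot supply: it is left as a shelved goal. *)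
symmetry; refine (lebesgue_measure_unique
  (mu := pushforward lebesgue_measure (center t : measurableTypeR R -> measurableTypeR R)
    : {measure set measurableTypeR R -> \bar R}) _ mA).
  move=> _ [[a b] _ <-]; rewrite /= /pushforward.
  have -> : center t @^-1` `]a, b] = `](a + t)%R, (b + t)%R]%classic.
    by apply/seteqP; split => s /=; rewrite !in_itv/= ltrBrDr lerBlDr.
  rewrite /= !lebesgue_measure_itv/= !lte_fin ltrD2r.
  by case: ifPn => // _; rewrite -!EFinB opprD addrACA subrr addr0.
Unshelve. exact: measurable_funB.
Qed.

Lemma ge0_integral_center (D : set R) (f : R -> \bar R) :
  measurable D -> measurable_fun D f -> (forall x, D x -> 0 <= f x) ->
  \int[lebesgue_measure]_(x in center t @^-1` D) f (x - t)%R =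
  \int[lebesgue_measure]_(x in D) f x.
Proof.
have mcenter : measurable_fun setT (center t : measurableTypeR R -> measurableTypeR R).
  exact: measurable_funB.
move=> mD mf f0; rewrite -(ge0_integral_pushforward mcenter) //; last first.
  by move=> x /set_mem; exact: f0.
refine (eq_measure_integral (m1 := pushforward lebesgue_measure
  (center t : measurableTypeR R -> measurableTypeR R) :
  {measure set measurableTypeR R -> \bar R}) _ _).
  by move=> A mA _; rewrite /= /pushforward lebesgue_measure_preimage_center.
Unshelve. exact: mcenter.
Qed.

End lebesgue_translation.

Lemma cvg_tail_integral (R : realType) (f : R -> R) :
  measurable_fun `]-oo, (0:R)] f -> (forall x, x <= 0 -> 0 <= f x) ->
  (\int[lebesgue_measure]_(x in `]-oo, (0:R)%R]) (f x)%:E < +oo)%E ->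
  (\int[lebesgue_measure]_(x in `]-oo, (- t)%R]) (f x)%:E)%E @[t --> +oo] --> 0%E.
Proof.
move=> mf f0 f_int; apply/cvge_pinftyP => u u_oo.
set I := `]-oo, (0:R)]%classic.
have mI : measurable I by exact: measurable_itv.
have If0 x : I x -> 0 <= f x by rewrite /I /= in_itv /=; exact: f0.
have mEf : measurable_fun I (EFin \o f) by exact/measurable_EFinP.
have mpatch k : measurable_fun I ((EFin \o f) \_ `]-oo, (- u k)%R]).
  have mk : measurable `]-oo, (- u k)%R] by exact: measurable_itv.
  apply/(measurable_restrict (EFin \o f) mk mI).
  by apply: (measurable_funS mI _ mEf) => x [].
have patch_cvg0 : (\int[lebesgue_measure]_(x in I)
    ((EFin \o f) \_ `]-oo, (- u k)%R] x))%E @[k --> \oo] --> 0%E.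
  rewrite -(integral0 lebesgue_measure I).
  refine (@dominated_cvg _ _ _ lebesgue_measure I mI
    (fun k => (EFin \o f) \_ `]-oo, (- u k)%R]) (cst 0%E) (EFin \o f) mpatch _ _ _ _).
  - move=> x Ix; apply: cvg_near_cst; near=> k; rewrite patchE ifF //.
    apply/negbTE; rewrite notin_setE /= in_itv /=; apply/negP; rewrite -ltNge ltrNl.
    near: k; exact: cvgry_gtr u_oo _ (num_real _).
  - by [].
  - apply/integrableP; split => //.
    by under eq_integral => x /set_mem Ix do rewrite /= ger0_norm ?If0 //.
  - move=> k x Ix; rewrite patchE.
    by case: ifPn => _; rewrite /= ?normr0 ?ger0_norm ?lee_fin ?If0.
move: patch_cvg0; apply: cvg_trans; apply: near_eq_cvg; near=> k.
rewrite -integral_mkcondr; congr integral; apply/setIidr.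
apply: subitvPr; rewrite bnd_simp oppr_le0.
by near: k; exact: cvgry_ger u_oo _ (num_real _).
Unshelve. all: end_near.
Qed.

Lemma measurable_trawl_past (R : realType) (d : R -> R) (t : R) :
  {within `]-oo, (0:R)], continuous d} -> 0 <= t -> measurable (trawl_past d t).
Proof.
move=> cd t0.
have md : measurable_fun `]-oo, (0:R)] d.
  exact: subspace_continuous_measurable_fun.
pose S1 := setT `&` [set p : R * R | p.2 <= 0].
pose S2 := S1 `&` [set p : R * R | 0 <= p.1].
have mS1 : measurable S1 by apply: measurable_fun_le.
have mS2 : measurable S2.
  by apply: measurable_fun_le => //; exact: measurable_funS measurable_fst.
have -> : trawl_past d t = S2 `&` [set p | p.1 <= d (p.2 - t)].
  apply/seteqP; split => -[x s] /=; rewrite /trawl_past /=.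
    by move=> [s0 /andP[x0 xd]].
  by move=> [[[_ s0] x0] xd]; split => //; apply/andP.
apply: measurable_fun_le => //; first exact: measurable_funS measurable_fst.
apply: (measurable_comp _ _ md); first exact: measurable_itv.
  by move=> _ [p [[_ s0] _] <-]; rewrite /= in_itv /= subr_le0 (le_trans s0).
by apply: measurable_funB => //; exact: measurable_funS measurable_snd.
Qed.

Lemma lebesgue_product_trawl_past (R : realType) (d : R -> R) (t : R) :
  {within `]-oo, (0:R)], continuous d} -> (forall s, s <= 0 -> 0 <= d s) ->
  0 <= t ->
  ((lebesgue_measure \x lebesgue_measure) (trawl_past d t) =
   \int[lebesgue_measure]_(u in `]-oo, (- t)%R]) (d u)%:E)%E.
Proof.
move=> cd d0 t0.
have mA := measurable_trawl_past cd t0.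
have md : measurable_fun `]-oo, (0:R)] d.
  exact: subspace_continuous_measurable_fun.
have d0t s : s <= 0 -> 0 <= d (s - t).
  by move=> s0; apply: d0; rewrite subr_le0 (le_trans s0).
rewrite /product_measure1 -indic_fubini_tonelli_FE // indic_fubini_tonelli //.
rewrite indic_fubini_tonelli_GE // -(@ge0_integral_center R t _ (fun u => (d u)%:E)).
- have -> : center t @^-1` `]-oo, (- t)%R] = `]-oo, (0:R)]%classic.
    by apply/seteqP; split => s /=; rewrite !in_itv /= lerBlDr addNr.
  rewrite [RHS]integral_mkcond; apply: eq_integral => s _ /=.
  rewrite patchE; case: ifPn => [|/negP s0].
    rewrite inE /= in_itv /= => s0.
    have -> : ysection (trawl_past d t) s = `[0, d (s - t)]%classic.
      apply/seteqP; split => x; rewrite /ysection /= in_itv /=.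
        by move=> /set_mem [].
      by move=> ?; apply/mem_set.
    rewrite lebesgue_measure_itv /= lte_fin.
    case: ltP => [_|dle0]; first by rewrite oppr0 adde0.
    by apply/esym/congr1/le_anti; rewrite dle0 d0t.
  rewrite (_ : ysection _ s = set0) ?measure0 //; apply/seteqP; split => x //=.
  by rewrite /ysection /= => /set_mem [/= s0' _]; apply: s0; rewrite inE /= in_itv /= s0'.
- exact: measurable_itv.
- apply/measurable_EFinP; apply: measurable_funS md => //.
  by move=> u /=; rewrite !in_itv /= => /le_trans; apply; rewrite oppr_le0.
- move=> u /=; rewrite in_itv /= => ut.
  by rewrite lee_fin d0 // (le_trans ut) // oppr_le0.
Qed.

Lemma prm_intensity_cylinder (R : realType) (n : nat)
    (nu : {measure set (n.-tuple R) -> \bar R}) (B : set (R * R)) :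
  measurable B -> B `<=` [set p | 0 <= p.1 <= 1] ->
  prm_intensity nu [set z : PRMspace R n | B z.2] =
  (nu setT * (lebesgue_measure \x lebesgue_measure) B)%E.
Proof.
move=> mB Bstrip; rewrite /prm_intensity.
have -> : [set z : PRMspace R n | B z.2] `&` [set z | 0 <= z.2.1 <= 1] =
    [set z | B z.2] by apply/setIidl => z /Bstrip.
rewrite /product_measure1.
transitivity (\int[nu]_(y in setT)
  (cst ((lebesgue_measure \x lebesgue_measure) B)) y)%E.
  apply: eq_integral => y _ /=; rewrite (_ : xsection _ y = B) //.
  by apply/seteqP; split => p; rewrite /xsection /= inE.
by rewrite integral_cst // muleC.
Qed.

Lemma measurable_cylinder (R : realType) (n : nat) (B : set (R * R)) :
  measurable B -> measurable [set z : PRMspace R n | B z.2].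
Proof. by move=> mB; rewrite -[X in measurable X]setTI; exact: measurable_snd. Qed.

Lemma measurable_coord (R : realType) (n : nat) (i : 'I_n) :
  measurable_fun setT (fun z : PRMspace R n => (tnth z.1 i)%:E).
Proof.
by apply/measurable_EFinP; exact: measurableT_comp (measurable_tnth i) measurable_fst.
Qed.

Lemma Lcomp_eq0 (R : realType) (n : nat) (i : 'I_n)
    (M : {measure set PRMspace R n -> \bar R}) (B : set (R * R)) :
  measurable B -> M [set z | B z.2] = 0%E -> Lcomp i M B = 0%E.
Proof.
move=> mB MB0; apply: null_set_integral => //; first exact: measurable_cylinder.
by apply: measurable_funS (measurable_coord i).
Qed.

Lemma measurable_Lcomp (R : realType) (n : nat) (i : 'I_n)
    d (Omega : measurableType d) (N : Omega -> {measure set PRMspace R n -> \bar R})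
    (B : set (R * R)) :
  (forall A, measurable A -> measurable_fun setT (fun w => N w A)) ->
  measurable B -> measurable_fun setT (fun w => Lcomp i (N w) B).
Proof.
move=> mN mB; pose f := (fun z : PRMspace R n => (tnth z.1 i)%:E) \_ [set z | B z.2].
have mf : measurable_fun setT f.
  apply/(measurable_restrictT _ _).1; first exact: measurable_cylinder.
  by apply: measurable_funS (measurable_coord i).
have -> : (fun w => Lcomp i (N w) B) =
    ((fun w => \int[N w]_z f^\+ z) \- (fun w => \int[N w]_z f^\- z))%E.
  by apply/funext => w; rewrite /Lcomp integral_mkcond integralE.
apply: emeasurable_funB.
- apply: (measurable_fun_integral_kernel mN); last exact: measurable_funepos.
  by move=> z; exact: funepos_ge0.
- apply: (measurable_fun_integral_kernel mN); last exact: measurable_funeneg.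
  by move=> z; exact: funeneg_ge0.
Qed.

Lemma poisson_random_measure_event_le (R : realType)
    dO (Omega : measurableType dO) (P : probability Omega R)
    dE (E : measurableType dE) (mu : set E -> \bar R)
    (N : Omega -> {measure set E -> \bar R}) (A : set E) (S : set Omega) :
  poisson_random_measure P mu N -> measurable A -> (0 <= mu A < +oo)%E ->
  measurable S -> (forall w, S w -> N w A != 0%E) -> (P S <= mu A)%E.
Proof.
move=> [mN [poisN _]] mA /andP[muA0 muAoo] mS SN.
pose Z := [set w | N w A = ((0%N)%:R)%:E].
have mZ : measurable Z.
  by have := mN _ mA measurableT [set 0%:E] (emeasurable_set1 _); rewrite setTI.
have SZ : S `<=` ~` Z by move=> w /SN /eqP.
apply: (@le_trans _ _ (P (~` Z))).
  by apply: le_measure; rewrite ?inE //; exact: measurableC.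
rewrite probability_setC // poisN // /poisson_weight expr0 fact0 div1r invr1 mul1r.
have muAE : mu A = (fine (mu A))%:E by rewrite fineK // ge0_fin_numE.
rewrite [X in (_ <= X)%E]muAE -EFinB lee_fin.
by have := expR_ge1Dx (- fine (mu A)); lra.
Qed.

Section trawl_tail_bound.
Context (R : realType) (n : nat) (nu : {measure set (n.-tuple R) -> \bar R})
  (dO : measure_display) (Omega : measurableType dO) (P : probability Omega R)
  (N : Omega -> {measure set (PRMspace R n) -> \bar R}) (i : 'I_n) (d : R -> R).
Hypothesis nu_fin : (nu setT < +oo)%E.
Hypothesis prmN : poisson_random_measure P (prm_intensity nu) N.
Hypothesis cd : {within `]-oo, (0:R)], continuous d}.
Hypothesis d01 : forall s, s <= 0 -> 0 <= d s <= 1.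
Hypothesis d_int : (\int[lebesgue_measure]_(s in `]-oo, (0:R)%R]) (d s)%:E < +oo)%E.

Lemma X0t_tail_bound (eps t : R) : 0 <= eps -> 0 <= t ->
  (P [set w | eps%:E < `| X0t i (N w) d t |] <=
   nu setT * \int[lebesgue_measure]_(u in `]-oo, (- t)%R]) (d u)%:E)%E.
Proof.
move=> eps0 t0.
have d0 s : s <= 0 -> 0 <= d s by move=> /d01 /andP[].
have mA := measurable_trawl_past cd t0.
have Astrip : trawl_past d t `<=` [set p | 0 <= p.1 <= 1].
  move=> [x s] [/= s0 /andP[x0 xd]]; rewrite x0 (le_trans xd) //.
  have st0 : s - t <= 0 by rewrite subr_le0 (le_trans s0).
  by have /andP[] := d01 st0.
have tail_ge0 : (0 <= \int[lebesgue_measure]_(u in `]-oo, (- t)%R]) (d u)%:E)%E.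
  apply: integral_ge0 => u; rewrite /= in_itv /= lee_fin => ut.
  by rewrite d0 // (le_trans ut) // oppr_le0.
have tail_fin : (\int[lebesgue_measure]_(u in `]-oo, (- t)%R]) (d u)%:E < +oo)%E.
  apply: le_lt_trans d_int; apply: ge0_subset_integral => //.
  - by apply/measurable_EFinP; exact: subspace_continuous_measurable_fun.
  - by move=> u; rewrite /= !in_itv /= => /le_trans; apply; rewrite oppr_le0.
rewrite -(lebesgue_product_trawl_past cd d0 t0) -prm_intensity_cylinder //.
case: (prmN) => mN _.
apply: poisson_random_measure_event_le prmN _ _ _ _ => //.
- exact: measurable_cylinder.
- rewrite prm_intensity_cylinder // lebesgue_product_trawl_past // mule_ge0 //=.
  by rewrite lte_mul_pinfty // ge0_fin_numE.
- have mX : measurable_fun setT (fun w => X0t i (N w) d t) := measurable_Lcomp i mN mA.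
  rewrite -[X in measurable X]setTI; apply: emeasurable_fun_o_infty => //.
  by apply: measurableT_comp mX.
- move=> w; apply: contraPneq => /(Lcomp_eq0 i mA) X0.
  by apply/negP; rewrite /X0t /= X0 abse0 lte_fin -leNgt.
Qed.

End trawl_tail_bound.

Theorem proposition6 (R : realType) (n : nat)
  (nu : {measure set (n.-tuple R) -> \bar R})
  (dO : measure_display) (Omega : measurableType dO) (P : probability Omega R)
  (N : Omega -> {measure set (PRMspace R n) -> \bar R})
  (i : 'I_n) (d : R -> R) :
  levy_measure nu ->
  nu [set y | ~ in_Zn_minus0 y] = 0%E ->
  (\int[nu]_y (Num.min 1 (tnorm y))%:E < +oo)%E ->
  poisson_random_measure P (prm_intensity nu) N ->
  {within `]-oo, (0:R)], continuous d} ->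
  (forall s, s <= 0 -> 0 <= d s <= 1) ->
  (\int[@lebesgue_measure R]_(s in `]-oo, (0:R)%R]) (d s)%:E < +oo)%E ->
  forall eps : R, 0 < eps ->
    P [set w | (eps%:E < `| X0t i (N w) d t |)%E] @[t --> +oo%R] --> 0%E.
Proof.
move=> _ nuZ nu_int prmN cd d01 d_int eps eps0.
have nu_fin := levy_measure_Zn_finite nuZ nu_int.
have md : measurable_fun `]-oo, (0:R)] d by exact: subspace_continuous_measurable_fun.
have d0 s : s <= 0 -> 0 <= d s by move=> /d01 /andP[].
have tail_cvg0 := cvg_tail_integral md d0 d_int.
apply: (@squeeze_cvge _ _ _ _ (cst 0%E) _
  (fun t => nu setT * \int[lebesgue_measure]_(u in `]-oo, (- t)%R]) (d u)%:E)%E).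
- near=> t; rewrite measure_ge0 /=.
  apply: X0t_tail_bound nu_fin prmN cd d01 d_int _ _ (ltW eps0) _.
  by near: t; exact: nbhs_pinfty_ge.
- exact: cvg_cst.
- rewrite -(mule0 (nu setT)); apply: cvgeZl => //.
  by rewrite ge0_fin_numE.
Unshelve. all: end_near.
Qed.
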